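(* $C_{U(25)^2}(25)\le 9$; that is, every sequence of length $9$ in $\mathbb Z_{25}$ has a $U(25)^2$-weighted zero-sum subsequence consisting of consecutive terms.
   Context: $\mathbb Z_{25}=\mathbb Z/25\mathbb Z$, $U(25)$ its group of units, $U(25)^2=\{x^2:x\in U(25)\}$. For $A\subseteq\mathbb Z_m$, a sequence $(y_1,\dots,y_t)$ ($t\ge1$) is an $A$-weighted zero-sum sequence if there exist $a_i\in A$ with $\sum a_iy_i=0$. $C_A(m)$ is the least positive integer $t$ such that every sequence of length $t$ in $\mathbb Z_m$ has a nonempty subsequence of consecutive terms that is an $A$-weighted zero-sum sequence. *)

From mathcomp Require Import all_boot all_order all_algebra.
Set Implicit Arguments. Unset Strict Implicit. Unset Printing Implicit Defensive.
Import GRing.Theory.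
Local Open Scope ring_scope.

Definition unitsZ (m : nat) : pred 'Z_m := fun x => x \is a GRing.unit.

Definition unit_squares (m : nat) : pred 'Z_m :=
  fun y => [exists x : 'Z_m, (x \is a GRing.unit) && (y == x ^+ 2)].

Definition weighted_zero_sum (m : nat) (A : pred 'Z_m) (s : seq 'Z_m) : Prop :=
  exists a : seq 'Z_m, [/\ size a = size s, all A a &
    \sum_(i < size s) a`_i * s`_i = 0].

(* C_A(m) is the least positive t with this property. *)
Definition consec_wzs_property (m : nat) (A : pred 'Z_m) (t : nat) : Prop :=
  forall s : seq 'Z_m, size s = t ->
    exists i j : nat, [/\ (i < j)%N, (j <= t)%N &
      weighted_zero_sum A (drop i (take j s))].

From mathcomp Require Import all_boot all_order all_algebra.
Set Implicit Arguments. Unset Strict Implicit. Unset Printing Implicit Defensive.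
Import GRing.Theory.
Local Open Scope ring_scope.

(* For 0 <= j <= |s| let
   E_j be the set of A-weighted sums of the nonempty blocks s_i, ..., s_(j-1)
   of consecutive terms ending just before position j.  Appending a term y
   gives E_(j+1) = { u + a y | a in A, u in {0} \cup E_j }, so the sets E_j
   are produced by a deterministic "step" driven by the terms of s.  If some
   E_j contains 0 we have found a zero-sum block; otherwise every E_j is one
   of the sets reachable from the empty set by steps that avoid 0.
   The first part of the file develops this for an arbitrary semiring,
   with the weights given by a list w contained in A and the terms ranging
   over a list U of candidate values: if no 0-avoiding state survives t
   steps, every sequence of length t has a weighted zero-sum block.
   For Z_25, U = all residues and w = the squares of units, the layers of
   reachable 0-avoiding states die out after 9 steps, which is checked by
   computation; this gives C_{U(25)^2}(25) <= 9. *)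

Section WeightedSums.
Variables (R : pzSemiRingType) (A : pred R).

Definition weighted_sum (s : seq R) (v : R) : Prop :=
  exists a : seq R, [/\ size a = size s, all A a &
    \sum_(i < size s) a`_i * s`_i = v].

Lemma weighted_sum_nil : weighted_sum [::] 0.
Proof. by exists [::]; rewrite big_ord0. Qed.

Lemma weighted_sum_rcons s y u a :
  weighted_sum s u -> a \in A -> weighted_sum (rcons s y) (u + a * y).
Proof.
move=> [b [size_b all_b <-]] Aa; exists (rcons b a); split.
- by rewrite !size_rcons size_b.
- by rewrite all_rcons all_b andbT; apply: Aa.
rewrite size_rcons big_ord_recr /= !nth_rcons size_b ltnn eqxx.
by congr (_ + _); apply: eq_bigr => i _; rewrite !nth_rcons size_b ltn_ord.
Qed.

Section Segments.
Variable s : seq R.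

Definition segment (i j : nat) : seq R := drop i (take j s).

Lemma segment_nil j : segment j j = [::].
Proof. by rewrite /segment drop_oversize // size_take_min geq_minl. Qed.

Lemma segment_rcons i j : (i <= j)%N -> (j < size s)%N ->
  segment i j.+1 = rcons (segment i j) s`_j.
Proof.
by move=> le_ij lt_js; rewrite /segment (take_nth 0 lt_js) drop_rcons // size_take lt_js.
Qed.

Definition ending_sum (j : nat) (v : R) : Prop :=
  exists2 i, (i < j)%N & weighted_sum (segment i j) v.

Definition zero_block (t : nat) : Prop :=
  exists i j, [/\ (i < j)%N, (j <= t)%N & weighted_sum (segment i j) 0].

Lemma ending_sum_extend j u a : (j < size s)%N ->
  u = 0 \/ ending_sum j u -> a \in A -> ending_sum j.+1 (u + a * s`_j).
Proof.
move=> lt_js [-> | [i lt_ij sum_u]] Aa.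
  exists j => //; rewrite segment_rcons // segment_nil.
  exact: weighted_sum_rcons weighted_sum_nil Aa.
exists i; first exact: ltnW.
by rewrite segment_rcons ?(ltnW lt_ij) //; apply: weighted_sum_rcons.
Qed.

End Segments.

Section Search.
Variables (w U : seq R).

(* The elements of U lying in L, in the order of U: a canonical list for the
   set L (when U is duplicate-free), so that equal states are identified. *)
Definition normalize (L : seq R) : seq R := [seq x <- U | x \in L].

Definition step (M : seq R) (y : R) : seq R :=
  normalize [seq a * y + u | a <- w, u <- 0 :: M].

Definition next_states (L : seq (seq R)) : seq (seq R) :=
  undup [seq N <- [seq step M y | M <- L, y <- U] | 0 \notin N].

Definition zero_free_states (t : nat) : seq (seq R) :=
  iter t next_states [:: [::]].

Hypotheses (w_sub_A : {subset w <= A}) (U_full : forall y : R, y \in U).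
Variable s : seq R.

Lemma step_sound j (M : seq R) : (j < size s)%N ->
  (forall u, u \in M -> ending_sum s j u) ->
  forall v, v \in step M s`_j -> ending_sum s j.+1 v.
Proof.
move=> lt_js sound_M v; rewrite mem_filter => /andP[/allpairsP[[a u] /= [wa Mu ->]] _].
rewrite addrC; apply: ending_sum_extend (w_sub_A wa) => //.
by move: Mu; rewrite inE => /predU1P[-> | /sound_M]; [left | right].
Qed.

Lemma search_invariant j : (j <= size s)%N ->
  zero_block s j \/
  exists2 M, M \in zero_free_states j & forall v, v \in M -> ending_sum s j v.
Proof.
elim: j => [_ | j IHj lt_js]; first by right; exists [::].
have [[i [k [lt_ik le_kj sum0]]] | [M reach_M sound_M]] := IHj (ltnW lt_js).
  by left; exists i, k; split; rewrite // (leq_trans le_kj).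
have sound_N := step_sound lt_js sound_M.
have [N0 | N0] := boolP (0 \in step M s`_j).
  by have [i lt_ij sum0] := sound_N 0 N0; left; exists i, j.+1.
right; exists (step M s`_j) => //.
by rewrite [zero_free_states _]iterS mem_undup mem_filter N0 allpairs_f ?U_full.
Qed.

Lemma zero_block_of_search t :
  zero_free_states t = [::] -> (t <= size s)%N -> zero_block s t.
Proof. by move=> no_states /search_invariant[// | [M]]; rewrite no_states. Qed.

End Search.
End WeightedSums.

Definition Zp_elems (m : nat) : seq 'Z_m := [seq inZp i | i <- iota 0 (Zp_trunc m).+2].

Lemma mem_Zp_elems m (x : 'Z_m) : x \in Zp_elems m.
Proof.
apply/mapP; exists (val x); first by rewrite mem_iota ltn_ord.
by apply: val_inj; rewrite /= modn_small.
Qed.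

Definition square_units (m : nat) : seq 'Z_m :=
  undup [seq x ^+ 2 | x <- Zp_elems m & x \is a GRing.unit].

Lemma square_units_sub m : {subset square_units m <= @unit_squares m}.
Proof.
move=> y; rewrite mem_undup => /mapP[x]; rewrite mem_filter => /andP[unit_x _] ->.
by apply/existsP; exists x; rewrite unit_x eqxx.
Qed.

Lemma consec_wzs_of_search m (A : pred 'Z_m) (w : seq 'Z_m) t :
  {subset w <= A} -> zero_free_states w (Zp_elems m) t = [::] ->
  consec_wzs_property A t.
Proof.
move=> w_sub_A no_states s size_s.
by apply: zero_block_of_search w_sub_A (@mem_Zp_elems m) _ _ no_states _; rewrite size_s.
Qed.

Lemma zero_free_states_25 :
  zero_free_states (square_units 25) (Zp_elems 25) 9 = [::].
Proof. by vm_compute. Qed.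

Theorem mainTheorem16 :
  @consec_wzs_property 25%N (@unit_squares 25%N) 9%N.
Proof. exact: consec_wzs_of_search (@square_units_sub 25) zero_free_states_25. Qed.
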